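(* Let $f\in\mathbf{C}\{X,Y\}$ be a nonzero power series without constant term such that the curve $f=0$ is reduced, and let $l\in\mathbf{C}\{X,Y\}$ be a power series without constant term with $\operatorname{ord} l=1$. Let $J(f,l)=\frac{\partial f}{\partial X}\frac{\partial l}{\partial Y}-\frac{\partial f}{\partial Y}\frac{\partial l}{\partial X}$ and assume $J(f,l)(0,0)=0$. If the curves $l=0$ and $f=0$ are transverse, then the curves $l=0$ and $J(f,l)=0$ are transverse.
   Context: $\mathbf{C}\{X,Y\}$ is the ring of convergent complex power series. For a nonzero series $g=\sum c_{\alpha\beta}X^\alpha Y^\beta$, $\operatorname{ord} g=\min\{\alpha+\beta: c_{\alpha\beta}\neq 0\}$ and the initial form of $g$ is $\sum_{\alpha+\beta=\operatorname{ord} g}c_{\alpha\beta}X^\alpha Y^\beta$; the tangents to $g=0$ are the lines given by the linear factors of the initial form. Two curves are transverse if they have no common tangent. A curve $f=0$ is reduced if $f$ has no multiple irreducible factors. *)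

From mathcomp Require Import all_boot all_algebra complex.
From mathcomp Require Import reals Rstruct.
Import GRing.Theory Num.Theory ComplexField.
Local Open Scope complex_scope.
Local Open Scope ring_scope.

Notation CC := (Rdefinitions.R[i]).

(* A (formal) power series in X, Y: coefficient c a b of X^a Y^b. *)
Definition ps := nat -> nat -> CC.

(* Convergence: the series converges on some polydisc of radius r > 0,
   i.e. (Cauchy estimates) |c_ab| r^(a+b) is bounded. C{X,Y} = convergent ps. *)
Definition convergent (f : ps) : Prop :=
  exists r M : Rdefinitions.R, 0 < r /\
    forall a b, `|f a b| * (r%:C) ^+ (a + b) <= M%:C.

Definition ps0 : ps := fun _ _ => 0.
Definition ps1 : ps := fun a b => if (a == 0%N) && (b == 0%N) then 1 else 0.

Definition psmul (f g : ps) : ps := fun a b =>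
  \sum_(i < a.+1) \sum_(j < b.+1) f i j * g (a - i)%N (b - j)%N.

Definition dX (f : ps) : ps := fun a b => f a.+1 b *+ a.+1.
Definition dY (f : ps) : ps := fun a b => f a b.+1 *+ b.+1.

Definition Jac (f l : ps) : ps := fun a b =>
  psmul (dX f) (dY l) a b - psmul (dY f) (dX l) a b.

Definition ps_unit (g : ps) : Prop :=
  exists h, convergent h /\ psmul g h = ps1.

Definition ps_irreducible (g : ps) : Prop :=
  convergent g /\ g <> ps0 /\ ~ ps_unit g /\
  forall h k, convergent h -> convergent k -> g = psmul h k ->
    ps_unit h \/ ps_unit k.

Definition reduced (f : ps) : Prop :=
  ~ exists g h, ps_irreducible g /\ convergent h /\ f = psmul (psmul g g) h.

Definition has_ord (g : ps) (d : nat) : Prop :=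
  [exists a : 'I_d.+1, g a (d - a)%N != 0] /\
  forall a b, (a + b < d)%N -> g a b = 0.

(* the degree-d homogeneous part (initial form when d = ord g) *)
Definition homog_part (g : ps) (d : nat) : ps := fun a b =>
  if (a + b == d)%N then g a b else 0.

Definition linform (u v : CC) : ps := fun a b =>
  if (a == 1%N) && (b == 0%N) then u
  else if (a == 0%N) && (b == 1%N) then v else 0.

(* the line u X + v Y = 0 is a tangent to g = 0: uX+vY is a (nonzero) linear
   factor of the initial form of g *)
Definition tangent (g : ps) (u v : CC) : Prop :=
  (u != 0 \/ v != 0) /\
  exists d, has_ord g d /\ exists h, homog_part g d = psmul (linform u v) h.

Definition transverse (g1 g2 : ps) : Prop :=
  g1 <> ps0 /\ g2 <> ps0 /\
  ~ exists u v, tangent g1 u v /\ tangent g2 u v.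

(* Write p = l_X(0), q = l_Y(0), so that the tangent of l = 0 is pX + qY = 0, and let F be the
   initial form of f, of degree m >= 1.  A binary form vanishes at (q, -p) iff pX + qY divides
   it, so transversality of l and f means F(q, -p) <> 0.  In degrees below m the Jacobian
   J(f,l) is q f_X - p f_Y, hence its degree-(m-1) part is the derivative q F_X - p F_Y of F
   along (q, -p), whose value at (q, -p) is m F(q, -p) <> 0 by Euler's identity.  So J(f,l) has
   order m - 1 and its initial form does not vanish at (q, -p): pX + qY is not a tangent. *)
From mathcomp Require Import all_boot all_algebra complex.
From mathcomp Require Import reals Rstruct ring zify.
From Stdlib Require Import Classical FunctionalExtensionality.
Import GRing.Theory Num.Theory ComplexField.
Local Open Scope complex_scope.
Local Open Scope ring_scope.

Lemma ps_ext (g h : ps) : (forall a b, g a b = h a b) -> g = h.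
Proof. by move=> gh; do 2![apply: functional_extensionality => ?]; exact: gh. Qed.

Lemma psmul_linform (u v : CC) (h : ps) a b : psmul (linform u v) h a b =
  (if a is a'.+1 then u * h a' b else 0) + (if b is b'.+1 then v * h a b' else 0).
Proof.
rewrite /psmul big_ord_recl /= big_ord_recl /= /linform /= !subn0 mul0r add0r addrC.
congr (_ + _).
  case: a => [|a]; first by rewrite big_ord0.
  rewrite big_ord_recl [X in _ + X]big1 => [|i _]; last first.
    by rewrite big1 // => j _; rewrite /bump /= mul0r.
  rewrite big_ord_recl big1 /= => [|j _]; last by rewrite /bump /= mul0r.
  by rewrite /bump /= subn0 subSS subn0 !addr0.
case: b => [|b]; first by rewrite big_ord0.
rewrite big_ord_recl big1 => [|i _]; last by rewrite /bump /= mul0r.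
by rewrite /bump /= subSS subn0 addr0.
Qed.

Lemma psmul_lowest (F G : ps) a b :
  (forall i j, (i + j < a + b)%N -> F i j = 0) -> psmul F G a b = F a b * G 0%N 0%N.
Proof.
move=> F_low; rewrite /psmul big_ord_recr /= big1 ?add0r => [|i _]; last first.
  by apply: big1 => j _; rewrite F_low ?mul0r //; have := ltn_ord i; have := ltn_ord j; lia.
rewrite big_ord_recr /= big1 ?add0r => [|j _]; last first.
  by rewrite F_low ?mul0r //; have := ltn_ord j; lia.
by rewrite !subnn.
Qed.

Lemma has_ord_unique {g d1 d2} : has_ord g d1 -> has_ord g d2 -> d1 = d2.
Proof.
move=> [/existsP [a1 g1] low1] [/existsP [a2 g2] low2].
case: (ltngtP d1 d2) => // lt_d.
- by move: g1; rewrite low2 ?eqxx // subnKC // -ltnS.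
- by move: g2; rewrite low1 ?eqxx // subnKC // -ltnS.
Qed.

Lemma has_ord_exists {g} : g <> ps0 -> exists d, has_ord g d.
Proof.
move=> g_neq0.
have [a [b gab]] : exists a b, g a b != 0.
  apply: NNPP => g0; apply: g_neq0; apply: ps_ext => a b.
  by apply/eqP; apply: contraT => gab; case: g0; exists a, b.
pose P d := [exists x : 'I_d.+1, g x (d - x)%N != 0].
have diag_neq0 a' b' : g a' b' != 0 -> P (a' + b')%N.
  have lt_a : (a' < (a' + b').+1)%N by rewrite ltnS leq_addr.
  by move=> ?; apply/existsP; exists (Ordinal lt_a); rewrite /= addKn.
have [d gd d_min] := ex_minnP (ex_intro P _ (diag_neq0 a b gab)).
exists d; split => // a' b' lt_d; apply/eqP; apply: contraTT lt_d => ga'b'.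
by rewrite -leqNgt; apply: d_min; apply: diag_neq0.
Qed.

Lemma has_ord_neq0 {g d} : has_ord g d -> g <> ps0.
Proof. by move=> [/existsP [a ga] _] g0; rewrite g0 eqxx in ga. Qed.

Definition homog_eval (g : ps) (d : nat) (x y : CC) : CC :=
  \sum_(a < d.+1) g a (d - a)%N * x ^+ a * y ^+ (d - a).

Lemma homog_evalZ g d c x y : homog_eval g d (c * x) (c * y) = c ^+ d * homog_eval g d x y.
Proof.
rewrite /homog_eval mulr_sumr; apply: eq_bigr => i _.
have le_id : (i <= d)%N by rewrite -ltnS.
have -> : c ^+ d = c ^+ i * c ^+ (d - i) by rewrite -exprD subnKC.
by rewrite !exprMn; ring.
Qed.

Lemma has_ord_homog_eval {g d x y} :
  (forall a b, (a + b < d)%N -> g a b = 0) -> homog_eval g d x y != 0 -> has_ord g d.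
Proof.
move=> low ev_neq0; split=> //; apply: contraNT ev_neq0 => /existsPn g0.
by apply/eqP/big1 => i _; move/negPn/eqP: (g0 i) => ->; rewrite !mul0r.
Qed.

Lemma homog_eval_linform_factor g d u v h :
  homog_part g d = psmul (linform u v) h -> homog_eval g d v (- u) = 0.
Proof.
move=> g_fact.
have coef a : (a <= d)%N -> g a (d - a)%N = psmul (linform u v) h a (d - a)%N.
  by move=> le_ad; rewrite -g_fact /homog_part subnKC // eqxx.
rewrite /homog_eval (eq_bigr (fun i : 'I_d.+1 =>
  psmul (linform u v) h i (d - i)%N * v ^+ i * (- u) ^+ (d - i))) => [|i _]; last first.
  by rewrite coef // -ltnS.
under eq_bigr do rewrite psmul_linform !mulrDl.
rewrite big_split /=; case: d {g_fact coef} => [|n].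
  by rewrite !big_ord_recl !big_ord0 /= !mul0r !add0r.
rewrite big_ord_recl [X in _ + X = _]big_ord_recr /= subnn !mul0r add0r addr0 -big_split /=.
apply: big1 => i _; have le_in : (i <= n)%N by rewrite -ltnS.
by rewrite /bump /= add0n add1n subSS subSn // !exprS; ring.
Qed.

Section SyntheticDivision.

Variables (g : ps) (d : nat) (p q : CC).
Hypothesis q_neq0 : q != 0.

(* Coefficient of X^a Y^(d-1-a) in the quotient of the degree-d part of g by pX + qY,
   computed from the X-free end. *)
Fixpoint quo_coef (a : nat) : CC :=
  if a is a'.+1 then (g a'.+1 (d - a'.+1)%N - p * quo_coef a') / q else g 0%N d / q.

Lemma quo_coefE a :
  q ^+ a.+1 * quo_coef a = \sum_(i < a.+1) g i (d - i)%N * q ^+ i * (- p) ^+ (a - i).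
Proof.
elim: a => [|a IHa] /=.
  by rewrite big_ord1 expr1 subn0 !expr0 !mulr1 mulrCA divff ?mulr1.
rewrite big_ord_recr /= subnn expr0 mulr1 exprS mulrAC mulrCA divff ?mulr1 //.
rewrite mulrBl -mulrA [quo_coef a * _]mulrC IHa mulr_sumr -sumrN addrC; congr (_ + _).
apply: eq_bigr => i _; have le_ia : (i <= a)%N by rewrite -ltnS.
by rewrite subSn // exprS; ring.
Qed.

Hypothesis root : homog_eval g d q (- p) = 0.

Lemma quo_coef_last : quo_coef d = 0.
Proof.
apply/eqP; move/eqP: root; rewrite /homog_eval -quo_coefE.
by rewrite mulf_eq0 expf_eq0 (negPf q_neq0) andbF.
Qed.

Lemma homog_part_linform_factor :
  homog_part g d =
  psmul (linform p q) (fun a b => if (a + b.+1 == d)%N then quo_coef a else 0).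
Proof.
have last0 := quo_coef_last.
apply: ps_ext => a b; rewrite psmul_linform /homog_part.
case: a => [|a]; case: b => [|b] /=; rewrite ?addr0 ?add0r ?add0n.
- case: eqP => // d0; move/eqP: last0; rewrite -d0 /= -d0.
  by rewrite mulf_eq0 invr_eq0 (negPf q_neq0) orbF => /eqP.
- by case: eqP => [<-|_]; [rewrite mulrC divfK | rewrite mulr0].
- rewrite addn0 addn1; case: eqP => [d_eq|_]; last by rewrite mulr0.
  move/eqP: last0; rewrite -d_eq /= -d_eq subnn mulf_eq0 invr_eq0 (negPf q_neq0) orbF subr_eq0.
  by move/eqP.
- rewrite addSnnS; case: ifP => [/eqP d_eq|_]; last by rewrite !mulr0 addr0.
  have -> : (d - a.+1)%N = b.+1 by rewrite -d_eq; lia.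
  by rewrite [q * _]mulrC divfK // addrC subrK.
Qed.

End SyntheticDivision.

Lemma homog_part_linform_X_factor g d p :
  p != 0 -> homog_eval g d 0 (- p) = 0 ->
  homog_part g d = psmul (linform p 0) (fun a b => if (a.+1 + b == d)%N then g a.+1 b / p else 0).
Proof.
move=> p_neq0 root.
have g0d : g 0%N d = 0.
  move: root; rewrite /homog_eval big_ord_recl big1 ?addr0 /= => [|i _]; last first.
    by rewrite /bump /= expr0n /= mulr0 mul0r.
  rewrite subn0 expr0 mulr1 => /eqP; rewrite mulf_eq0 expf_eq0 oppr_eq0 (negPf p_neq0) andbF.
  by rewrite orbF => /eqP.
apply: ps_ext => a b; rewrite psmul_linform /homog_part.
case: a => [|a]; case: b => [|b] /=; rewrite ?mul0r ?addr0 ?add0r ?add0n.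
- by case: eqP => // d0; rewrite {2}d0.
- by case: eqP => // d_eq; rewrite d_eq.
- by case: ifP => _; [rewrite mulrC divfK | rewrite mulr0].
- by case: ifP => _; [rewrite mulrC divfK | rewrite mulr0].
Qed.

Lemma tangent_homog_eval {g d u v} : has_ord g d -> tangent g u v -> homog_eval g d v (- u) = 0.
Proof.
move=> g_ord [_ [d' [g_ord' [h g_fact]]]].
rewrite -(has_ord_unique g_ord' g_ord); exact: homog_eval_linform_factor g_fact.
Qed.

Lemma homog_eval_tangent {g d p q} :
  has_ord g d -> (p != 0) || (q != 0) -> homog_eval g d q (- p) = 0 -> tangent g p q.
Proof.
move=> g_ord pq_neq0 root; split; first by case/orP: pq_neq0; [left | right].
exists d; split=> //; have [q0 | q_neq0] := eqVneq q 0.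
  move: pq_neq0 root; rewrite q0 eqxx orbF => p_neq0 root.
  by eexists; apply: homog_part_linform_X_factor.
by eexists; apply: homog_part_linform_factor.
Qed.

Lemma has_ord1_linear_coef {l} : has_ord l 1 -> (l 1%N 0%N != 0) || (l 0%N 1%N != 0).
Proof. by case=> /existsP [[[|[|k]] lt_k] /= l_neq0] _ //; rewrite l_neq0 ?orbT. Qed.

Lemma tangent_has_ord1 l : has_ord l 1 -> tangent l (l 1%N 0%N) (l 0%N 1%N).
Proof.
move=> l_ord; apply: homog_eval_tangent l_ord (has_ord1_linear_coef l_ord) _.
by rewrite /homog_eval !big_ord_recl big_ord0 /=; ring.
Qed.

Lemma tangent_has_ord1_coef {l u v} : has_ord l 1 -> tangent l u v ->
  exists c, l 1%N 0%N = c * u /\ l 0%N 1%N = c * v.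
Proof.
move=> l_ord [_ [d [l_ord' [h l_fact]]]]; move: l_fact.
rewrite (has_ord_unique l_ord' l_ord) => l_fact.
have := congr1 (fun F => F 1%N 0%N) l_fact; have := congr1 (fun F => F 0%N 1%N) l_fact.
rewrite /= !psmul_linform /homog_part /= addr0 add0r => -> ->.
by exists (h 0%N 0%N); rewrite ![h _ _ * _]mulrC.
Qed.

Lemma Jac_low_degree {f} l {n a b} :
  (forall a b, (a + b < n.+1)%N -> f a b = 0) -> (a + b <= n)%N ->
  Jac f l a b = l 0%N 1%N * (f a.+1 b *+ a.+1) - l 1%N 0%N * (f a b.+1 *+ b.+1).
Proof.
move=> f_low le_abn; rewrite /Jac !psmul_lowest.
- by rewrite /dX /dY !mulr1n mulrC [X in _ - X]mulrC.
- by move=> i j lt_ij; rewrite /dY f_low ?mul0rn //; lia.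
- by move=> i j lt_ij; rewrite /dX f_low ?mul0rn //; lia.
Qed.

(* Euler's identity for the initial form of f, differentiated along (q, -p). *)
Lemma homog_eval_Jac f l n : (forall a b, (a + b < n.+1)%N -> f a b = 0) ->
  homog_eval (Jac f l) n (l 0%N 1%N) (- l 1%N 0%N) =
  homog_eval f n.+1 (l 0%N 1%N) (- l 1%N 0%N) *+ n.+1.
Proof.
move=> f_low; set q := l 0%N 1%N; set p := l 1%N 0%N.
pose F a := f a (n.+1 - a)%N * q ^+ a * (- p) ^+ (n.+1 - a).
rewrite /homog_eval (eq_bigr (fun i : 'I_n.+1 => F i.+1 *+ i.+1 + F i *+ (n.+1 - i))) =>
  [|i _]; last first.
  have le_in : (i <= n)%N by rewrite -ltnS.
  rewrite (Jac_low_degree l f_low) ?subnKC // /F subSS subSn // !exprS -/p -/q; ring.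
rewrite big_split /= -sumrMnl (eq_bigr (fun i : 'I_n.+2 => F i *+ i + F i *+ (n.+1 - i)))
  => [|i _]; last by rewrite -mulrnDr subnKC // -ltnS.
rewrite big_split /= [X in _ = X + _]big_ord_recl [X in _ = _ + X]big_ord_recr /=.
by rewrite subnn !mulr0n add0r addr0.
Qed.

Theorem mainTheorem2 (f l : ps) :
  convergent f -> f <> ps0 -> f 0%N 0%N = 0 -> reduced f ->
  convergent l -> l 0%N 0%N = 0 -> has_ord l 1 ->
  Jac f l 0%N 0%N = 0 ->
  transverse l f -> transverse l (Jac f l).
Proof.
move=> _ f_neq0 f00 _ _ _ l_ord _ [l_neq0 [_ no_common]].
set p := l 1%N 0%N; set q := l 0%N 1%N.
have [[|n] f_ord] := has_ord_exists f_neq0.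
  by case: f_ord => /existsP [[[|k] lt_k] /= f_neq0'] _ //; rewrite f00 eqxx in f_neq0'.
have f_low := f_ord.2.
have f_root_neq0 : homog_eval f n.+1 q (- p) != 0.
  apply/eqP => root; apply: no_common; exists p, q; split; first exact: tangent_has_ord1.
  exact: homog_eval_tangent f_ord (has_ord1_linear_coef l_ord) root.
have J_root_neq0 : homog_eval (Jac f l) n q (- p) != 0.
  by rewrite homog_eval_Jac // mulrn_eq0 negb_or f_root_neq0.
have J_ord : has_ord (Jac f l) n.
  apply: has_ord_homog_eval J_root_neq0 => a b lt_abn.
  by rewrite (Jac_low_degree l f_low) ?f_low ?mul0rn ?mulr0 ?subr0 //; lia.
split=> //; split; first exact: has_ord_neq0 J_ord.
move=> [u [v [l_tan J_tan]]]; have [c [pc qc]] := tangent_has_ord1_coef l_ord l_tan.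
move/negP: J_root_neq0; apply; apply/eqP.
rewrite /p /q pc qc -[- (c * u)]mulrN homog_evalZ.
by rewrite (tangent_homog_eval J_ord J_tan) mulr0.
Qed.
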